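(* Let $s\in\mathbb{N}$, let $M$ be a quadratic form on $\mathbb{F}_{p}^{d}$, and let $x_{1},x_{2}\in\Gamma^{s}(M)$ and $y\in\Gamma^{s}_{1}(M)$. If $x_{1}\sim y$ and $x_{2}\sim y$, then $x_{1}\sim x_{2}$. In particular, $\sim$ is an equivalence relation on $\Gamma^{s}_{1}(M)$.
   Context: $\mathrm{HP}_{d}(s)$: homogeneous degree-$s$ polynomials in $\mathbb{F}_{p}[x_{1},\dots,x_{d}]$ plus $0$. $M(n)=(nA)\cdot n+n\cdot u+v$ with $A$ symmetric. For a subspace $V$, $J^{M}_{V}$ is the ideal of $\mathbb{F}_{p}[x_{1},\dots,x_{d}]$ generated by $n\mapsto(nA)\cdot n$ and $n\mapsto(hA)\cdot n$, $h\in V$. $\Gamma^{s}(M)$ is the set of pairs $(h,J^{M}_{V}+f)$ with $V$ a subspace of $\mathbb{F}_{p}^{d}$, $h\in V$, $f\in\mathrm{HP}_{d}(s)$; $\Gamma^{s}_{1}(M)$ is the subset of elements of the form $(h,J^{M}_{\mathrm{span}\{h\}}+f)$. $(h,I+f)\sim(h',I'+f')$ iff $h=h'$ and $f-f'\in I+I'$. *)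

From HB Require Import structures.
From mathcomp Require Import all_boot all_order all_algebra.
From mathcomp Require Import mpoly.
Set Implicit Arguments. Unset Strict Implicit. Unset Printing Implicit Defensive.
Import GRing.Theory.
Local Open Scope ring_scope.

Section Defs.
Variables (p d : nat).

Notation F := 'F_p.
Notation vec := 'rV[F]_d.
Notation poly := {mpoly F[d]}.

(* A quadratic form M(n) = (nA).n + n.u + v with A symmetric. *)
Record qform := QForm {
  qA : 'M[F]_d;
  qu : vec;
  qv : F;
  qA_sym : qA^T = qA }.

Definition quad_poly (M : qform) : poly :=
  \sum_(i < d) \sum_(j < d) (qA M i j) *: ('X_i * 'X_j).

Definition lin_poly (M : qform) (h : vec) : poly :=
  \sum_(j < d) ((h *m qA M) 0 j) *: 'X_j.

Definition ideal_gen (S : poly -> Prop) (f : poly) : Prop :=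
  exists (k : nat) (g c : 'I_k -> poly),
    (forall i, S (g i)) /\ f = \sum_(i < k) c i * g i.

Definition JM_gens (M : qform) (V : {vspace vec}) (g : poly) : Prop :=
  g = quad_poly M \/ exists2 h, h \in V & g = lin_poly M h.

Definition JM (M : qform) (V : {vspace vec}) : poly -> Prop :=
  ideal_gen (JM_gens M V).

Definition ideal_add (I I' : poly -> Prop) (f : poly) : Prop :=
  exists a b, I a /\ I' b /\ f = a + b.

(* An element (h, J^M_V + f) of Gamma^s(M) is represented by the triple
   (h, V, f); the relation ~ below only depends on h, the ideal J^M_V and
   the coset J^M_V + f. *)
Definition gamma_elt := (vec * {vspace vec} * poly)%type.

Definition in_Gamma (s : nat) (x : gamma_elt) : Prop :=
  x.1.1 \in x.1.2 /\ x.2 \is s.-homog.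

Definition in_Gamma1 (s : nat) (x : gamma_elt) : Prop :=
  in_Gamma s x /\ x.1.2 = <[x.1.1]>%VS.

Definition gamma_sim (M : qform) (x y : gamma_elt) : Prop :=
  x.1.1 = y.1.1 /\ ideal_add (JM M x.1.2) (JM M y.1.2) (x.2 - y.2).

End Defs.

(* If x ~ y with y in Gamma^s_1(M), then h := h_y lies in V_x, so the
   generators of J^M_{span h} are among those of J^M_{V_x}; hence
   J^M_{V_x} + J^M_{span h} = J^M_{V_x}, and f_x - f_y lies in J^M_{V_x}.
   For x1, x2 both equivalent to y, the difference
   f_1 - f_2 = (f_1 - f_y) - (f_2 - f_y) therefore lies in J^M_{V_1} + J^M_{V_2}.
   Neither the primality of p nor the homogeneity of the f's plays a role. *)
From HB Require Import structures.
From mathcomp Require Import all_boot all_order all_algebra.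
From mathcomp Require Import mpoly.
Set Implicit Arguments. Unset Strict Implicit. Unset Printing Implicit Defensive.
Import GRing.Theory.
Local Open Scope ring_scope.

Section IdealGen.
Variables (p d : nat).
Implicit Types (S T : {mpoly 'F_p[d]} -> Prop) (f g : {mpoly 'F_p[d]}).

Lemma ideal_gen0 S : ideal_gen S 0.
Proof.
exists 0%N, (fun _ => 0), (fun _ => 0); split; first by case.
by rewrite big_ord0.
Qed.

Lemma ideal_genN S f : ideal_gen S f -> ideal_gen S (- f).
Proof.
case=> k [g [c [Sg ->]]]; exists k, g, (fun i => - c i); split => //.
by rewrite -sumrN; apply: eq_bigr => i _; rewrite mulNr.
Qed.

Lemma ideal_genD S f g : ideal_gen S f -> ideal_gen S g -> ideal_gen S (f + g).
Proof.
case=> k [a [c [Sa ->]]]; case=> k' [a' [c' [Sa' ->]]].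
exists (k + k')%N,
  (fun i => match split i with inl j => a j | inr j => a' j end),
  (fun i => match split i with inl j => c j | inr j => c' j end).
split; first by move=> i; case: (split i).
rewrite big_split_ord /=; congr (_ + _); apply: eq_bigr => i _.
  by rewrite -/(unsplit (inl i)) unsplitK.
by rewrite -/(unsplit (inr i)) unsplitK.
Qed.

Lemma ideal_gen_sub S T f :
  (forall g, S g -> T g) -> ideal_gen S f -> ideal_gen T f.
Proof. by move=> ST [k [g [c [Sg ->]]]]; exists k, g, c; split=> // i; apply: ST. Qed.

Lemma ideal_add0 S T : ideal_add (ideal_gen S) (ideal_gen T) 0.
Proof. by exists 0, 0; rewrite addr0; do !split; apply: ideal_gen0. Qed.

Lemma ideal_addN S T f :
  ideal_add (ideal_gen S) (ideal_gen T) f ->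
  ideal_add (ideal_gen T) (ideal_gen S) (- f).
Proof.
case=> a [b [Sa [Sb ->]]]; exists (- b), (- a).
by rewrite opprD addrC; do !split; apply: ideal_genN.
Qed.

Lemma ideal_add_idPl S T f :
  (forall g, T g -> S g) ->
  ideal_add (ideal_gen S) (ideal_gen T) f -> ideal_gen S f.
Proof.
move=> TS [a [b [Sa [Tb ->]]]]; apply: ideal_genD => //.
exact: ideal_gen_sub Tb.
Qed.

End IdealGen.

Section GammaSim.
Variables (p d : nat) (M : qform p d).
Implicit Types (x y : gamma_elt p d) (U V : {vspace 'rV['F_p]_d}).

Lemma JM_gens_subv U V g : (U <= V)%VS -> JM_gens M U g -> JM_gens M V g.
Proof.
move=> /subvP UV [->|[h hU ->]]; first by left.
by right; exists h => //; apply: UV.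
Qed.

Lemma gamma_sim_refl x : gamma_sim M x x.
Proof. by split=> //; rewrite subrr; apply: ideal_add0. Qed.

Lemma gamma_sim_sym x y : gamma_sim M x y -> gamma_sim M y x.
Proof. by case=> hxy Ixy; split=> //; rewrite -opprB; apply: ideal_addN. Qed.

Lemma gamma_sim_span x y :
  x.1.1 \in x.1.2 -> y.1.2 = <[y.1.1]>%VS ->
  gamma_sim M x y -> JM M x.1.2 (x.2 - y.2).
Proof.
move=> hxV Vy [hxy Ixy]; rewrite Vy -hxy in Ixy.
apply: ideal_add_idPl Ixy => g.
by apply: JM_gens_subv; rewrite -memvE.
Qed.

Lemma gamma_sim_trans_span x1 x2 y :
  x1.1.1 \in x1.1.2 -> x2.1.1 \in x2.1.2 -> y.1.2 = <[y.1.1]>%VS ->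
  gamma_sim M x1 y -> gamma_sim M x2 y -> gamma_sim M x1 x2.
Proof.
move=> h1V1 h2V2 Vy s1 s2; split; first by rewrite s1.1 s2.1.
exists (x1.2 - y.2), (- (x2.2 - y.2)).
split; first exact: gamma_sim_span s1.
split; first by apply: ideal_genN; apply: gamma_sim_span s2.
by rewrite opprB addrA subrK.
Qed.

End GammaSim.

Theorem lemma2p5 (p d s : nat) (hp : prime p) (M : qform p d) :
  (forall x1 x2 y : gamma_elt p d,
     in_Gamma s x1 -> in_Gamma s x2 -> in_Gamma1 s y ->
     gamma_sim M x1 y -> gamma_sim M x2 y -> gamma_sim M x1 x2) /\
  (forall y1 y2 y3 : gamma_elt p d,
     in_Gamma1 s y1 -> in_Gamma1 s y2 -> in_Gamma1 s y3 ->
     [/\ gamma_sim M y1 y1,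
         (gamma_sim M y1 y2 -> gamma_sim M y2 y1) &
         (gamma_sim M y1 y2 -> gamma_sim M y2 y3 -> gamma_sim M y1 y3)]).
Proof.
split=> [x1 x2 y [h1V1 _] [h2V2 _] [_ Vy] | y1 y2 y3 [[h1V1 _] _] [_ V2] [[h3V3 _] _]].
  exact: gamma_sim_trans_span.
split; [exact: gamma_sim_refl | exact: gamma_sim_sym |].
by move=> s12 s23; apply: gamma_sim_trans_span h1V1 h3V3 V2 s12 (gamma_sim_sym s23).
Qed.
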